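(* In the single-component setting, suppose $\sigma\le\frac{4\sqrt2}{\sqrt\pi}$ and $\gamma^\star_\sigma\le\min\{1,\frac1{4\sqrt\rho}\}$, where $\gamma^\star_\sigma=\sigma^2+\sigma\sqrt{2\log\frac{4\sqrt2}{\sqrt\pi\sigma}}$. Then $\frac{\partial}{\partial\sigma}L(w)\ge p(0)\Big(\frac{\sigma}{11}\int_0^\infty\exp\big((|s(0)|-\frac{\sqrt\rho}4-1)\delta-\frac\rho2\delta^2\big)d\delta-2\sqrt2\exp\big(\frac{s(0)^2}{\nu+\sigma^{-2}}\big)\frac1{\sqrt{\nu+\sigma^{-2}}}\Big)$.
   Context: Single-component setting: $y$ uniform on $\{\pm1\}$; $x=(x_1,x_2)$, $x_1\in\mathbb{R}^{d_1}$, $x_2\sim\mathcal{N}(0,\Sigma_2)$ with $\Sigma_2\succ0$ independent of $x_1$. $\ell_{exp}(t)=\exp(-|t|)$, $L(w)=\mathbb{E}[\ell_{exp}(w^\top x)]$. For fixed $w=(w_1,w_2)$: $\sigma=\sqrt{w_2^\top\Sigma_2w_2}$; $p$ is the density of $\mu=w_1^\top x_1$, assumed such that $\log p$ is differentiable, $\nu$-strongly concave and $\rho$-smooth (i.e. $-\rho\le(\log p)''\le-\nu$) for some $0<\nu\le\rho$; $s(\mu)=\frac{p'(\mu)}{p(\mu)}$. $L(w)=\mathbb{E}_\mu[g_\sigma(\mu)]$ with $g_\sigma(\mu)=\mathbb{E}_{Z\sim\mathcal{N}(0,1)}[\ell_{exp}(\mu+\sigma Z)]$, and $\frac{\partial}{\partial\sigma}L(w)=\mathbb{E}_\mu[\frac{\partial}{\partial\sigma}g_\sigma(\mu)]$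 denotes the derivative with respect to $\sigma$ with the law of $\mu$ held fixed. *)

From Stdlib Require Import Reals.
From Coquelicot Require Import Coquelicot.
Open Scope R_scope.

Definition ell_exp (t : R) : R := exp (- Rabs t).

Definition std_normal_pdf (z : R) : R := exp (- z ^ 2 / 2) / sqrt (2 * PI).

Definition int_R (f : R -> R) : R :=
  RInt_gen f (Rbar_locally m_infty) (Rbar_locally p_infty).

Definition int_0_inf (f : R -> R) : R :=
  RInt_gen f (at_point 0) (Rbar_locally p_infty).

(* g_sigma(mu) = E_{Z ~ N(0,1)} [ l_exp(mu + sigma Z) ] *)
Definition g_sig (sigma mu : R) : R :=
  int_R (fun z => std_normal_pdf z * ell_exp (mu + sigma * z)).

(* d/dsigma L(w) := E_mu [ d/dsigma g_sigma(mu) ], law of mu (density p) fixed *)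
Definition dL_dsigma (p : R -> R) (sigma : R) : R :=
  int_R (fun mu => p mu * Derive (fun t => g_sig t mu) sigma).

Definition score (p : R -> R) (x : R) : R := Derive p x / p x.

Definition gamma_star (sigma : R) : R :=
  sigma ^ 2 + sigma * sqrt (2 * ln (4 * sqrt 2 / (sqrt PI * sigma))).

From Stdlib Require Import Reals Lra.
From Coquelicot Require Import Coquelicot.
Open Scope R_scope.

(* With phi the standard normal density, completing the square on each side of z = -mu/t gives
   a closed form g_t(mu) = G t mu in terms of the Gaussian distribution function, whence
       d/dsigma g_sigma(mu) = sigma G sigma mu - 2 phi(mu / sigma),
   so dL/dsigma = sigma * int p(mu) G sigma mu - 2 * int p(mu) phi(mu/sigma).  Then:
   - gamma*_sigma <= 1 forces sigma <= 1, hence G sigma mu >= exp(-|mu|)/11; rho-smoothness of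
     log p gives p(mu) >= p(0) exp(s(0) mu - rho mu^2/2); keeping only the half-line in the
     direction of sign s(0) yields the first term of the bound;
   - nu-concavity gives p(mu) <= p(0) exp(s(0) mu - nu mu^2/2), so p(mu) phi(mu/sigma) is below a
     Gaussian profile of curvature nu + sigma^-2, itself below a Laplace profile with explicit
     integral; this yields the second term. *)

Notation phi := std_normal_pdf.

Notation is_RInt_R f l :=
  (is_RInt_gen f (Rbar_locally m_infty) (Rbar_locally p_infty) l).
Notation is_RInt_right f a l :=
  (is_RInt_gen f (at_point a) (Rbar_locally p_infty) l).
Notation is_RInt_left f a l :=
  (is_RInt_gen f (Rbar_locally m_infty) (at_point a) l).

Definition locally_integrable (f : R -> R) : Prop := forall a b, ex_RInt f a b.

Lemma continuous_locally_integrable (f : R -> R) :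
  (forall x, continuous f x) -> locally_integrable f.
Proof. intros Hf a b; apply (ex_RInt_continuous (V := R_CompleteNormedModule)); auto. Qed.

Lemma is_RInt_gen_of_ex (f : R -> R) Fa Fb : ProperFilter Fa -> ProperFilter Fb ->
  ex_RInt_gen f Fa Fb -> is_RInt_gen f Fa Fb (RInt_gen f Fa Fb).
Proof. intros; apply (RInt_gen_correct (V := R_CompleteNormedModule)); auto. Qed.

Lemma RInt_gen_eq_of_is (f : R -> R) Fa Fb l : ProperFilter Fa -> ProperFilter Fb ->
  is_RInt_gen f Fa Fb l -> RInt_gen f Fa Fb = l.
Proof. intros; apply (is_RInt_gen_unique (V := R_CompleteNormedModule)); auto. Qed.

Lemma is_RInt_gen_ext_eq (f g : R -> R) Fa Fb l : Filter Fa -> Filter Fb ->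
  (forall x, f x = g x) -> is_RInt_gen f Fa Fb l -> is_RInt_gen g Fa Fb l.
Proof.
  intros FFa FFb Hfg. apply is_RInt_gen_ext; auto.
  apply (@filter_forall _ _ (filter_prod_filter _ _ Fa Fb FFa FFb)); auto.
Qed.

Lemma is_RInt_right_ext (f g : R -> R) a l :
  (forall x, a < x -> f x = g x) -> is_RInt_right f a l -> is_RInt_right g a l.
Proof.
  intros Hfg Hl. apply is_RInt_gen_ext with f; [|exact Hl].
  exists (fun x => x = a) (fun y => a < y); [reflexivity | exists a; auto |].
  intros x y -> Hy z; simpl. rewrite Rmin_left, Rmax_right by lra. intros; apply Hfg; lra.
Qed.

Lemma is_RInt_left_ext (f g : R -> R) a l :
  (forall x, x < a -> f x = g x) -> is_RInt_left f a l -> is_RInt_left g a l.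
Proof.
  intros Hfg Hl. apply is_RInt_gen_ext with f; [|exact Hl].
  exists (fun x => x < a) (fun y => y = a); [exists a; auto | reflexivity |].
  intros x y Hx -> z; simpl. rewrite Rmin_left, Rmax_right by lra. intros; apply Hfg; lra.
Qed.

Lemma is_RInt_gen_iff_lim (f : R -> R) Fa Fb l : locally_integrable f ->
  is_RInt_gen f Fa Fb l <->
  filterlim (fun ab => RInt f (fst ab) (snd ab)) (filter_prod Fa Fb) (locally l).
Proof.
  intros Hf; split; intros Hl P HP; destruct (Hl P HP) as [Q S HQ HS H];
    exists Q S; auto; intros x y Qx Sy.
  - destruct (H x y Qx Sy) as [z [Hz Pz]]. unfold filtermap; simpl.
    simpl in Hz; rewrite (is_RInt_unique _ _ _ _ Hz); exact Pz.
  - exists (RInt f x y); split;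
      [apply (RInt_correct (V := R_CompleteNormedModule)), Hf | apply (H x y Qx Sy)].
Qed.

Lemma ball_R (x y : R) (eps : R) : ball x eps y <-> Rabs (y - x) < eps.
Proof. reflexivity. Qed.

Lemma RInt_abs_le_dominated (f g : R -> R) a b :
  ex_RInt f a b -> ex_RInt g a b -> (forall x, Rabs (f x) <= g x) ->
  Rabs (RInt f a b) <= Rabs (RInt g a b).
Proof.
  assert (Hle : forall a b, a <= b -> ex_RInt f a b -> ex_RInt g a b ->
            (forall x, Rabs (f x) <= g x) -> Rabs (RInt f a b) <= Rabs (RInt g a b)).
  { clear a b; intros a b Hab Hf Hg Hd.
    apply Rle_trans with (RInt (fun t => Rabs (f t)) a b); [apply abs_RInt_le; auto |].
    apply Rle_trans with (RInt g a b); [| apply Rle_abs].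
    apply RInt_le; auto. apply ex_RInt_norm; auto. }
  intros Hf Hg Hd. destruct (Rle_or_lt a b) as [Hab | Hba]; [apply Hle; auto |].
  assert (Hf' : ex_RInt f b a) by (apply ex_RInt_swap; auto).
  assert (Hg' : ex_RInt g b a) by (apply ex_RInt_swap; auto).
  rewrite <- (opp_RInt_swap f), <- (opp_RInt_swap g) by auto.
  unfold opp; simpl; rewrite !Rabs_Ropp. apply Hle; auto; lra.
Qed.

(* Existence by domination: the partial integrals of f are Cauchy because those of g are. *)
Lemma ex_RInt_gen_dominated (f g : R -> R) Fa Fb lg :
  ProperFilter Fa -> ProperFilter Fb ->
  locally_integrable f -> locally_integrable g ->
  (forall x, Rabs (f x) <= g x) -> is_RInt_gen g Fa Fb lg -> ex_RInt_gen f Fa Fb.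
Proof.
  intros PFa PFb Hf Hg Hd Hl. apply is_RInt_gen_iff_lim in Hl; auto.
  assert (Hc : exists y, filterlim (fun ab => RInt f (fst ab) (snd ab))
                           (filter_prod Fa Fb) (locally y)).
  { apply filterlim_locally_cauchy. intros eps.
    assert (He : 0 < eps / 4) by (destruct eps; simpl; lra).
    destruct (Hl _ (locally_ball lg (mkposreal _ He))) as [Q S HQ HS H].
    exists (fun ab => Q (fst ab) /\ S (snd ab)); split; [exists Q S; auto |].
    intros [a b] [a' b'] [Qa Sb] [Qa' Sb']; simpl in *.
    pose proof (H a b Qa Sb) as Hab; pose proof (H a' b Qa' Sb) as Ha'b;
      pose proof (H a b' Qa Sb') as Hab'; unfold filtermap in *; simpl in *.
    rewrite ball_R in *.
    assert (Ef : RInt f a' b' - RInt f a b = RInt f a' a + RInt f b b').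
    { rewrite <- (RInt_Chasles f a' a b'), <- (RInt_Chasles f a b b') by auto.
      unfold plus; simpl; ring. }
    assert (Eg1 : RInt g a' b - RInt g a b = RInt g a' a).
    { rewrite <- (RInt_Chasles g a' a b) by auto. unfold plus; simpl; ring. }
    assert (Eg2 : RInt g a b' - RInt g a b = RInt g b b').
    { rewrite <- (RInt_Chasles g a b b') by auto. unfold plus; simpl; ring. }
    pose proof (RInt_abs_le_dominated f g a' a (Hf _ _) (Hg _ _) Hd) as D1.
    pose proof (RInt_abs_le_dominated f g b b' (Hf _ _) (Hg _ _) Hd) as D2.
    rewrite Ef. simpl in *.
    pose proof (Rabs_triang (RInt f a' a) (RInt f b b')).
    rewrite <- Eg1 in D1; rewrite <- Eg2 in D2.
    revert Hab Ha'b Hab' D1 D2.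
    generalize (RInt g a b) (RInt g a' b) (RInt g a b'); intros r1 r2 r3.
    unfold Rabs; repeat destruct Rcase_abs; lra. }
  destruct Hc as [y Hy]; exists y; apply is_RInt_gen_iff_lim; auto.
Qed.

Lemma is_RInt_R_ge (f : R -> R) l c a b :
  (forall x y v, x <= a -> b <= y -> is_RInt f x y v -> c <= v) ->
  is_RInt_R f l -> c <= l.
Proof.
  intros Hc Hl. apply Rle_plus_epsilon; intros eps Heps.
  assert (Hev : filter_prod (Rbar_locally m_infty) (Rbar_locally p_infty)
                  (fun xy => forall v, is_RInt f (fst xy) (snd xy) v -> c <= v)).
  { econstructor 1 with (fun x => x < a) (fun y => b < y); [exists a | exists b |]; auto.
    intros x y Hx Hy v; apply Hc; simpl; lra. }
  destruct (filter_ex _ (filter_and _ _ Hev (Hl _ (locally_ball l (mkposreal _ Heps)))))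
    as [xy [Hxy [v [Hv Hball]]]].
  apply Hxy in Hv. apply ball_R in Hball; simpl in Hball.
  apply Rabs_def2 in Hball; unfold minus, plus, opp in Hball; simpl in Hball; lra.
Qed.

Lemma is_RInt_R_nonneg (f : R -> R) l : (forall x, 0 <= f x) -> is_RInt_R f l -> 0 <= l.
Proof.
  intros Hf. apply is_RInt_R_ge with 0 0. intros x y v Hx Hy Hv.
  rewrite <- (is_RInt_unique _ _ _ _ Hv).
  apply RInt_ge_0; [lra | eexists; exact Hv | intros; apply Hf].
Qed.

Lemma is_RInt_R_le (f g : R -> R) lf lg :
  (forall x, f x <= g x) -> is_RInt_R f lf -> is_RInt_R g lg -> lf <= lg.
Proof.
  intros Hfg Hf Hg. cut (0 <= lg - lf); [lra |].
  apply (is_RInt_R_ge (fun x => g x - f x) _ _ 0 0);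
    [| exact (is_RInt_gen_minus _ _ _ _ Hg Hf)].
  intros x y v Hx Hy Hv. rewrite <- (is_RInt_unique _ _ _ _ Hv).
  apply RInt_ge_0; [lra | eexists; exact Hv |].
  intros z _; specialize (Hfg z); lra.
Qed.

Lemma is_RInt_R_ge_RInt (f : R -> R) l a b : a <= b ->
  locally_integrable f -> (forall x, 0 <= f x) -> is_RInt_R f l -> RInt f a b <= l.
Proof.
  intros Hab Hf Hpos. apply is_RInt_R_ge with a b.
  intros x y v Hx Hy Hv. rewrite <- (is_RInt_unique _ _ _ _ Hv).
  rewrite <- (RInt_Chasles f x a y), <- (RInt_Chasles f a b y) by auto.
  pose proof (RInt_ge_0 f x a Hx (Hf _ _) (fun z _ => Hpos z)).
  pose proof (RInt_ge_0 f b y Hy (Hf _ _) (fun z _ => Hpos z)).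
  unfold plus; simpl; lra.
Qed.

Lemma is_RInt_gen_zero Fa Fb : Filter Fa -> Filter Fb -> is_RInt_gen (fun _ : R => 0) Fa Fb 0.
Proof.
  intros FFa FFb P HP. apply (@filter_forall _ _ (filter_prod_filter _ _ Fa Fb FFa FFb)).
  intros [a b]; exists 0; split; [| exact (locally_singleton _ _ HP)].
  pose proof (is_RInt_const a b 0) as H. unfold scal in H; simpl in H; unfold mult in H; simpl in H.
  rewrite Rmult_0_r in H; exact H.
Qed.

Lemma is_RInt_right_le_R (f g : R -> R) I L :
  (forall x, 0 <= g x) -> (forall x, 0 <= x -> f x <= g x) ->
  is_RInt_right f 0 I -> is_RInt_R g L -> I <= L.
Proof.
  intros Hg Hfg HI HL. set (q := fun x => if Rle_dec 0 x then f x else 0).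
  assert (Hq : is_RInt_R q (plus 0 I)).
  { apply (is_RInt_gen_Chasles (V := R_NormedModule) _ 0).
    - apply (is_RInt_left_ext (fun _ => 0)); [| apply is_RInt_gen_zero; apply filter_filter].
      intros x Hx; unfold q; destruct (Rle_dec 0 x); [lra | reflexivity].
    - apply (is_RInt_right_ext f); [| exact HI].
      intros x Hx; unfold q; destruct (Rle_dec 0 x); [reflexivity | lra]. }
  replace I with (plus 0 I) by (unfold plus; simpl; ring).
  apply (is_RInt_R_le q g _ _); [| exact Hq | exact HL].
  intros x; unfold q; destruct (Rle_dec 0 x); [apply Hfg; lra | apply Hg].
Qed.

Lemma is_RInt_gen_comp_lin (f : R -> R) (u v : R) Fa Fb Ga Gb l :
  filterlim (fun x => u * x + v) Ga Fa -> filterlim (fun x => u * x + v) Gb Fb ->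
  is_RInt_gen f Fa Fb l -> is_RInt_gen (fun y => u * f (u * y + v)) Ga Gb l.
Proof.
  intros HA HB Hl P HP. destruct (Hl P HP) as [Q S HQ HS H].
  exists (fun x => Q (u * x + v)) (fun y => S (u * y + v)); [apply HA, HQ | apply HB, HS |].
  intros x y Qx Sy. destruct (H _ _ Qx Sy) as [w [Hw Pw]].
  exists w; split; [apply (is_RInt_comp_lin f u v x y w Hw) | exact Pw].
Qed.

Lemma filterlim_affine_at_point (u v a : R) :
  filterlim (fun x => u * x + v) (at_point a) (at_point (u * a + v)).
Proof. intros P HP; exact HP. Qed.

Lemma filterlim_affine_infty (u v : R) : 0 < u ->
  filterlim (fun x => u * x + v) (Rbar_locally p_infty) (Rbar_locally p_infty) /\
  filterlim (fun x => u * x + v) (Rbar_locally m_infty) (Rbar_locally m_infty) /\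
  filterlim (fun x => - u * x + v) (Rbar_locally p_infty) (Rbar_locally m_infty) /\
  filterlim (fun x => - u * x + v) (Rbar_locally m_infty) (Rbar_locally p_infty).
Proof.
  intros Hu.
  assert (Hlt : forall M x, (M - v) / u < x -> M < u * x + v).
  { intros M x Hx. apply (Rmult_lt_compat_l u) in Hx; [| exact Hu].
    replace (u * ((M - v) / u)) with (M - v) in Hx by (field; lra). lra. }
  assert (Hgt : forall M x, x < (M - v) / u -> u * x + v < M).
  { intros M x Hx. apply (Rmult_lt_compat_l u) in Hx; [| exact Hu].
    replace (u * ((M - v) / u)) with (M - v) in Hx by (field; lra). lra. }
  repeat split; intros P [M HM].
  - exists ((M - v) / u); intros x Hx; apply HM, Hlt, Hx.
  - exists ((M - v) / u); intros x Hx; apply HM, Hgt, Hx.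
  - exists (- ((M - v) / u)); intros x Hx; apply HM.
    replace (- u * x + v) with (u * - x + v) by ring. apply Hgt; lra.
  - exists (- ((M - v) / u)); intros x Hx; apply HM.
    replace (- u * x + v) with (u * - x + v) by ring. apply Hlt; lra.
Qed.

Lemma is_RInt_gen_comp_opp (f : R -> R) Fa Fb Ga Gb l :
  Filter Ga -> Filter Gb ->
  filterlim (fun x => - 1 * x + 0) Ga Fa -> filterlim (fun x => - 1 * x + 0) Gb Fb ->
  is_RInt_gen f Fa Fb l -> is_RInt_gen (fun z => f (- z)) Gb Ga l.
Proof.
  intros FGa FGb HA HB Hl.
  pose proof (is_RInt_gen_comp_lin f (- 1) 0 _ _ _ _ _ HA HB Hl) as H.
  apply is_RInt_gen_swap, is_RInt_gen_opp in H; auto.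
  rewrite opp_opp in H. revert H; apply is_RInt_gen_ext_eq; auto.
  intros z. unfold opp; simpl. replace (- 1 * z + 0) with (- z) by ring. ring.
Qed.

Lemma is_RInt_right_reflect (f : R -> R) a l :
  is_RInt_right f a l -> is_RInt_left (fun z => f (- z)) (- a) l.
Proof.
  apply is_RInt_gen_comp_opp; try apply at_point_filter; try apply Rbar_locally_filter.
  - replace a with (- 1 * - a + 0) at 2 by ring. apply filterlim_affine_at_point.
  - apply (filterlim_affine_infty 1 0 Rlt_0_1).
Qed.

Lemma is_RInt_R_reflect (f : R -> R) l : is_RInt_R f l -> is_RInt_R (fun z => f (- z)) l.
Proof.
  apply is_RInt_gen_comp_opp; try apply Rbar_locally_filter;
    apply (filterlim_affine_infty 1 0 Rlt_0_1).
Qed.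

Lemma is_RInt_left_shift (f : R -> R) a c l :
  is_RInt_left f (a + c) l -> is_RInt_left (fun z => f (z + c)) a l.
Proof.
  intros Hl. apply (is_RInt_gen_ext_eq (fun z => 1 * f (1 * z + c)));
    try apply Rbar_locally_filter; try apply at_point_filter.
  { intros z; rewrite Rmult_1_l; f_equal; ring. }
  replace (a + c) with (1 * a + c) in Hl by ring.
  exact (is_RInt_gen_comp_lin f 1 c _ _ _ _ _
           (proj1 (proj2 (filterlim_affine_infty 1 c Rlt_0_1)))
           (filterlim_affine_at_point 1 c a) Hl).
Qed.

Lemma is_RInt_right_shift (f : R -> R) a c l :
  is_RInt_right f (a + c) l -> is_RInt_right (fun z => f (z + c)) a l.
Proof.
  intros Hl. apply (is_RInt_gen_ext_eq (fun z => 1 * f (1 * z + c)));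
    try apply Rbar_locally_filter; try apply at_point_filter.
  { intros z; rewrite Rmult_1_l; f_equal; ring. }
  replace (a + c) with (1 * a + c) in Hl by ring.
  exact (is_RInt_gen_comp_lin f 1 c _ _ _ _ _ (filterlim_affine_at_point 1 c a)
           (proj1 (filterlim_affine_infty 1 c Rlt_0_1)) Hl).
Qed.

Lemma is_RInt_exp_right (c k m : R) : 0 < k ->
  is_RInt_right (fun x => exp (c - k * (x - m))) m (exp c / k).
Proof.
  intros Hk. set (F := fun x => - exp (c - k * (x - m)) / k).
  assert (DF : forall x, is_derive F x (exp (c - k * (x - m)))).
  { intros x; unfold F; auto_derive; [auto | unfold Rminus; field; lra]. }
  assert (Hinner : is_lim (fun x => c - k * (x - m)) p_infty m_infty).
  { apply (is_lim_ext (fun x => - k * x + (c + k * m))); [intros; ring |].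
    apply (filterlim_affine_infty k (c + k * m) Hk). }
  assert (Hlim : is_lim F p_infty 0).
  { apply (is_lim_ext (fun x => (- / k) * exp (c - k * (x - m)))); [intros; unfold F; field; lra |].
    replace (Finite 0) with (Rbar_mult (- / k) 0) by (simpl; f_equal; ring).
    apply is_lim_scal_l. apply (is_lim_comp exp _ _ _ _ is_lim_exp_m Hinner).
    exists 0; intros; discriminate. }
  replace (exp c / k) with (0 - F m)
    by (unfold F; rewrite Rminus_diag, Rmult_0_r, Rminus_0_r; field; lra).
  apply (is_RInt_gen_ext_eq (Derive F)); try apply at_point_filter; try apply Rbar_locally_filter.
  { intros x; apply is_derive_unique, DF. }
  apply is_RInt_gen_Derive.
  - apply filter_forall; intros ab x _; eexists; apply DF.
  - apply filter_forall; intros ab x _.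
    apply (continuous_ext (fun x => exp (c - k * (x - m))));
      [intros; symmetry; apply is_derive_unique, DF |].
    apply continuous_exp_comp, (ex_derive_continuous (K := R_AbsRing) (V := R_NormedModule)).
    auto_derive; auto.
  - intros P HP; exact (locally_singleton _ _ HP).
  - intros P HP; exact (Hlim P HP).
Qed.

Lemma is_RInt_exp_left (c k m : R) : 0 < k ->
  is_RInt_left (fun x => exp (c + k * (x - m))) m (exp c / k).
Proof.
  intros Hk.
  pose proof (is_RInt_right_reflect _ _ _ (is_RInt_exp_right c k (- m) Hk)) as H.
  rewrite Ropp_involutive in H. revert H.
  apply is_RInt_gen_ext_eq; try apply at_point_filter; try apply Rbar_locally_filter.
  intros x; f_equal; ring.
Qed.

Lemma is_RInt_exp_abs (c k m : R) : 0 < k ->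
  is_RInt_R (fun x => exp (c - k * Rabs (x - m))) (2 * exp c / k).
Proof.
  intros Hk. replace (2 * exp c / k) with (plus (exp c / k) (exp c / k))
    by (unfold plus; simpl; field; lra).
  apply (is_RInt_gen_Chasles (V := R_NormedModule) _ m).
  - apply (is_RInt_left_ext (fun x => exp (c + k * (x - m)))); [| apply is_RInt_exp_left, Hk].
    intros x Hx; rewrite Rabs_left by lra; f_equal; ring.
  - apply (is_RInt_right_ext (fun x => exp (c - k * (x - m)))); [| apply is_RInt_exp_right, Hk].
    intros x Hx; rewrite Rabs_pos_eq by lra; reflexivity.
Qed.

Lemma exp_le_compat (x y : R) : x <= y -> exp x <= exp y.
Proof. intros [Hlt | ->]; [apply Rlt_le, exp_increasing, Hlt | apply Rle_refl]. Qed.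

Lemma continuous_exp_affine (c k x : R) : continuous (fun y => exp (c + k * y)) x.
Proof.
  apply (ex_derive_continuous (K := R_AbsRing) (V := R_NormedModule)); auto_derive; auto.
Qed.

Lemma sqrt_2PI_bounds : 1 <= sqrt (2 * PI) <= 3.
Proof.
  pose proof PI2_3_2; pose proof PI_4. split.
  - rewrite <- sqrt_1; apply sqrt_le_1_alt; lra.
  - rewrite <- (sqrt_square 3) by lra; apply sqrt_le_1_alt; lra.
Qed.

Lemma phi_pos (z : R) : 0 < phi z.
Proof.
  apply Rdiv_lt_0_compat; [apply exp_pos |]. pose proof sqrt_2PI_bounds; lra.
Qed.

Lemma phi_le_exp (z : R) : phi z <= exp (- z ^ 2 / 2).
Proof.
  unfold std_normal_pdf. pose proof sqrt_2PI_bounds. pose proof (exp_pos (- z ^ 2 / 2)).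
  apply Rmult_le_reg_r with (sqrt (2 * PI)); [lra |].
  unfold Rdiv; rewrite Rmult_assoc, Rinv_l by lra. nra.
Qed.

Lemma phi_le_1 (z : R) : phi z <= 1.
Proof.
  eapply Rle_trans; [apply phi_le_exp |]. rewrite <- exp_0.
  apply exp_le_compat. pose proof (pow2_ge_0 z); lra.
Qed.

Lemma phi_even (z : R) : phi (- z) = phi z.
Proof. unfold std_normal_pdf; replace ((- z) ^ 2) with (z ^ 2) by ring; reflexivity. Qed.

Lemma phi_continuous (z : R) : continuous phi z.
Proof.
  apply (ex_derive_continuous (K := R_AbsRing) (V := R_NormedModule)).
  unfold std_normal_pdf; auto_derive. pose proof sqrt_2PI_bounds; lra.
Qed.

Lemma phi_scaled_continuous (sigma x : R) : sigma <> 0 ->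
  continuous (fun m => phi (m / sigma)) x.
Proof.
  intros Hs. apply (continuous_comp (fun m => m / sigma) phi); [| apply phi_continuous].
  apply (ex_derive_continuous (K := R_AbsRing) (V := R_NormedModule)); auto_derive; auto.
Qed.

Lemma phi_integrable : locally_integrable phi.
Proof. apply continuous_locally_integrable, phi_continuous. Qed.

(* Gaussian tails are dominated by exponential tails, since -z^2/2 <= 1/2 - z. *)
Lemma phi_right_tail (a : R) : ex_RInt_gen phi (at_point a) (Rbar_locally p_infty).
Proof.
  apply (ex_RInt_gen_dominated phi (fun x => exp ((1/2 - a) - 1 * (x - a))) _ _
           (exp (1/2 - a) / 1));
    try apply at_point_filter; try apply Rbar_locally_filter.
  - apply phi_integrable.
  - apply continuous_locally_integrable; intros x.
    apply (continuous_ext (fun x => exp (1/2 + (-1) * x))); [intros; f_equal; ring |].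
    apply continuous_exp_affine.
  - intros x. rewrite Rabs_pos_eq by apply Rlt_le, phi_pos.
    eapply Rle_trans; [apply phi_le_exp |]. apply exp_le_compat.
    pose proof (pow2_ge_0 (x - 1)); nra.
  - apply is_RInt_exp_right; lra.
Qed.

Lemma phi_left_tail (a : R) : ex_RInt_gen phi (Rbar_locally m_infty) (at_point a).
Proof.
  destruct (phi_right_tail (- a)) as [l Hl]. exists l.
  apply is_RInt_right_reflect in Hl. rewrite Ropp_involutive in Hl. revert Hl.
  apply is_RInt_gen_ext_eq; try apply at_point_filter; try apply Rbar_locally_filter.
  apply phi_even.
Qed.

(* The Gaussian distribution function, split at 0 into a constant and a primitive. *)
Definition gauss_left0 : R := RInt_gen phi (Rbar_locally m_infty) (at_point 0).
Definition gauss_right0 : R := RInt_gen phi (at_point 0) (Rbar_locally p_infty).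
Definition gauss_prim (x : R) : R := RInt phi 0 x.
Definition Phi (x : R) : R := gauss_left0 + gauss_prim x.
Definition Psi (x : R) : R := gauss_right0 - gauss_prim x.

Lemma is_RInt_Phi (x : R) : is_RInt_left phi x (Phi x).
Proof.
  apply (is_RInt_gen_Chasles (V := R_NormedModule) _ 0).
  - apply is_RInt_gen_of_ex, phi_left_tail; [apply Rbar_locally_filter | apply at_point_filter].
  - apply is_RInt_gen_at_point, (RInt_correct (V := R_CompleteNormedModule)), phi_integrable.
Qed.

Lemma is_RInt_Psi (x : R) : is_RInt_right phi x (Psi x).
Proof.
  destruct (phi_right_tail x) as [v Hv]; change R in v.
  assert (H : is_RInt_right phi 0 (plus (gauss_prim x) v)).
  { apply (is_RInt_gen_Chasles (V := R_NormedModule) _ x); auto.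
    apply is_RInt_gen_at_point, (RInt_correct (V := R_CompleteNormedModule)), phi_integrable. }
  unfold Psi, gauss_right0.
  rewrite (RInt_gen_eq_of_is _ _ _ _ (at_point_filter _) (Rbar_locally_filter _) H).
  unfold plus; simpl. replace (gauss_prim x + v - gauss_prim x) with (v : R) by ring. exact Hv.
Qed.

Lemma gauss_prim_derive (x : R) : is_derive gauss_prim x (phi x).
Proof.
  apply (is_derive_RInt (V := R_NormedModule) phi gauss_prim 0 x); [| apply phi_continuous].
  apply filter_forall; intros; apply (RInt_correct (V := R_CompleteNormedModule)), phi_integrable.
Qed.

(* Closed form of g_sigma: splitting at z0 = -mu/t, where mu + t z changes sign, and
   completing the square turns each half into a shifted Gaussian tail. *)
Definition G (t mu : R) : R :=
  exp (t ^ 2 / 2 + mu) * Phi (- mu / t - t) + exp (t ^ 2 / 2 - mu) * Psi (- mu / t + t).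

Lemma phi_mul_exp (t c z : R) : phi z * exp (c + t * z) = exp (t ^ 2 / 2 + c) * phi (z - t).
Proof.
  unfold std_normal_pdf, Rdiv.
  transitivity (exp (- z ^ 2 * / 2 + (c + t * z)) * / sqrt (2 * PI));
    [rewrite (exp_plus (- z ^ 2 * / 2)); ring |].
  replace (- z ^ 2 * / 2 + (c + t * z)) with (t ^ 2 * / 2 + c + - (z - t) ^ 2 * / 2)
    by field.
  rewrite exp_plus; ring.
Qed.

Lemma is_RInt_G (t mu : R) : 0 < t ->
  is_RInt_R (fun z => phi z * ell_exp (mu + t * z)) (G t mu).
Proof.
  intros Ht. set (z0 := - mu / t).
  assert (Hz0 : forall z, mu + t * z <= 0 <-> z <= z0).
  { intros z; unfold z0; split; intros H.
    - apply (Rmult_le_reg_l t); [lra |]. replace (t * (- mu / t)) with (- mu) by (field; lra). lra.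
    - apply (Rmult_le_compat_l t) in H; [| lra].
      replace (t * (- mu / t)) with (- mu) in H by (field; lra). lra. }
  apply (is_RInt_gen_Chasles (V := R_NormedModule) _ z0).
  - pose proof (is_RInt_gen_scal _ (exp (t ^ 2 / 2 + mu)) _
                  (is_RInt_left_shift phi z0 (- t) _ (is_RInt_Phi (z0 + - t)))) as H.
    revert H; apply is_RInt_left_ext; intros z Hz.
    unfold ell_exp, scal; simpl; unfold mult; simpl.
    rewrite Rabs_left1 by (apply Hz0; lra). rewrite Ropp_involutive, phi_mul_exp.
    reflexivity.
  - pose proof (is_RInt_gen_scal _ (exp (t ^ 2 / 2 - mu)) _
                  (is_RInt_right_shift phi z0 t _ (is_RInt_Psi (z0 + t)))) as H.
    revert H; apply is_RInt_right_ext; intros z Hz.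
    unfold ell_exp, scal; simpl; unfold mult; simpl.
    assert (Hpos : 0 <= mu + t * z) by (destruct (Rle_dec (mu + t * z) 0) as [Hn|Hn];
                                         [apply Hz0 in Hn; lra | lra]).
    rewrite Rabs_pos_eq by exact Hpos.
    replace (- (mu + t * z)) with (- mu + (- t) * z) by ring.
    rewrite phi_mul_exp. replace (z - - t) with (z + t) by ring.
    replace ((- t) ^ 2 / 2 + - mu) with (t * (t * 1) / 2 - mu) by (unfold Rdiv; ring).
    reflexivity.
Qed.

Lemma g_sig_G (t mu : R) : 0 < t -> g_sig t mu = G t mu.
Proof.
  intros Ht. unfold g_sig, int_R.
  apply RInt_gen_eq_of_is; try apply Rbar_locally_filter. apply is_RInt_G, Ht.
Qed.

Lemma Derive_gauss_prim (x : R) : Derive gauss_prim x = phi x.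
Proof. apply is_derive_unique, gauss_prim_derive. Qed.

Lemma ex_derive_gauss_prim (x : R) : ex_derive gauss_prim x.
Proof. eexists; apply gauss_prim_derive. Qed.

Lemma phi_complete_square (t mu e : R) : t <> 0 -> (e = 1 \/ e = -1) ->
  phi (e * t - mu / t) = phi (mu / t) / exp (t ^ 2 / 2 - e * mu).
Proof.
  intros Ht He. unfold std_normal_pdf.
  replace (- (e * t - mu / t) ^ 2 / 2) with (- (mu / t) ^ 2 / 2 + - (t ^ 2 / 2 - e * mu))
    by (destruct He as [-> | ->]; field; auto).
  rewrite exp_plus, exp_Ropp. pose proof (exp_pos (t ^ 2 / 2 - e * mu)).
  pose proof sqrt_2PI_bounds. field; lra.
Qed.

Lemma G_derive (s mu : R) : 0 < s ->
  is_derive (fun t => G t mu) s (s * G s mu - 2 * phi (mu / s)).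
Proof.
  intros Hs. unfold G, Phi, Psi. auto_derive.
  - repeat split; try apply ex_derive_gauss_prim; lra.
  - rewrite !Derive_gauss_prim.
    replace (- mu * / s + - s) with (- 1 * s - mu / s) by (field; lra).
    replace (- mu * / s + s) with (1 * s - mu / s) by (field; lra).
    rewrite !phi_complete_square by (auto; lra).
    pose proof (exp_pos (s ^ 2 / 2 - - 1 * mu)); pose proof (exp_pos (s ^ 2 / 2 - 1 * mu)).
    replace (s * (s * 1) * / 2 + mu) with (s ^ 2 / 2 - - 1 * mu) by (field; lra).
    replace (s * (s * 1) * / 2 + - mu) with (s ^ 2 / 2 - 1 * mu) by (field; lra).
    replace (s ^ 2 / 2 + mu) with (s ^ 2 / 2 - - 1 * mu) by (field; lra).
    replace (s ^ 2 / 2 - mu) with (s ^ 2 / 2 - 1 * mu) by (field; lra).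
    replace (- mu / s - s) with (- 1 * s - mu / s) by (field; lra).
    replace (- mu / s + s) with (1 * s - mu / s) by (field; lra).
    field; lra.
Qed.

Lemma Derive_g_sig (s mu : R) : 0 < s ->
  Derive (fun t => g_sig t mu) s = s * G s mu - 2 * phi (mu / s).
Proof.
  intros Hs. rewrite (Derive_ext_loc _ (fun t => G t mu)); [apply is_derive_unique, G_derive, Hs |].
  exists (mkposreal s Hs); intros t Ht. apply g_sig_G.
  apply ball_R, Rabs_lt_between in Ht; unfold minus, plus, opp in Ht; simpl in Ht; lra.
Qed.

Lemma G_continuous (s mu : R) : 0 < s -> continuous (fun m => G s m) mu.
Proof.
  intros Hs. apply (ex_derive_continuous (K := R_AbsRing) (V := R_NormedModule)).
  unfold G, Phi, Psi. auto_derive. repeat split; try apply ex_derive_gauss_prim; lra.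
Qed.

(* The total mass of phi (its value 1 is never needed) bounds G from above. *)
Definition gauss_total : R := gauss_left0 + gauss_right0.

Lemma is_RInt_phi : is_RInt_R phi gauss_total.
Proof.
  replace gauss_total with (plus (Phi 0) (Psi 0))
    by (unfold gauss_total, Phi, Psi, plus; simpl; ring).
  apply (is_RInt_gen_Chasles (V := R_NormedModule) _ 0); [apply is_RInt_Phi | apply is_RInt_Psi].
Qed.

Lemma ell_exp_bounds (x : R) : 0 < ell_exp x <= 1.
Proof.
  unfold ell_exp; split; [apply exp_pos |]. rewrite <- exp_0.
  apply exp_le_compat. pose proof (Rabs_pos x); lra.
Qed.

Lemma G_bounds (s mu : R) : 0 < s -> 0 <= G s mu <= gauss_total.
Proof.
  intros Hs. pose proof (is_RInt_G s mu Hs) as HG.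
  assert (Hle : forall z, 0 <= phi z * ell_exp (mu + s * z) <= phi z).
  { intros z. pose proof (phi_pos z). pose proof (ell_exp_bounds (mu + s * z)). nra. }
  split.
  - exact (is_RInt_R_nonneg _ _ (fun z => proj1 (Hle z)) HG).
  - exact (is_RInt_R_le _ _ _ _ (fun z => proj2 (Hle z)) HG is_RInt_phi).
Qed.

(* 2 exp(-3/2) / sqrt(2 pi) ~ 0.178: the Gaussian mass on [-1,1] seen through exp(-|.| - 1). *)
Lemma gauss_window_constant : 1 / 11 <= 2 * exp (- (3 / 2)) / sqrt (2 * PI).
Proof.
  rewrite exp_Ropp. pose proof sqrt_2PI_bounds. pose proof (exp_pos (3 / 2)).
  assert (He : exp (3 / 2) <= 6).
  { assert (exp (3 / 2) * exp (3 / 2) <= 27); [| nra].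
    rewrite <- exp_plus. replace (3 / 2 + 3 / 2) with (1 + 1 + 1) by field.
    rewrite !exp_plus. pose proof exp_le_3. pose proof (exp_pos 1).
    assert (exp 1 * exp 1 <= 9) by nra. nra. }
  apply Rmult_le_reg_r with (sqrt (2 * PI) * exp (3 / 2) * 11); [nra |].
  field_simplify; nra.
Qed.

(* For sigma <= 1, restricting g_sigma(d) to z in [-1, 1] gives g_sigma(d) >= exp(-|d|)/11. *)
Lemma G_lower (s d : R) : 0 < s -> s <= 1 -> exp (- Rabs d) / 11 <= G s d.
Proof.
  intros Hs Hs1. set (h := fun z => phi z * ell_exp (d + s * z)).
  set (c := exp (- (3 / 2)) / sqrt (2 * PI) * exp (- Rabs d)).
  assert (Hh : locally_integrable h).
  { apply continuous_locally_integrable; intros z.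
    apply (continuous_mult (K := R_AbsRing)); [apply phi_continuous |].
    apply continuous_exp_comp, (continuous_opp (V := R_NormedModule)), continuous_Rabs_comp.
    apply (ex_derive_continuous (K := R_AbsRing) (V := R_NormedModule)); auto_derive; auto. }
  assert (Hwindow : forall z, -1 <= z <= 1 -> c <= h z).
  { intros z Hz. unfold c, h, ell_exp, std_normal_pdf.
    assert (Habs : Rabs (d + s * z) <= Rabs d + 1).
    { eapply Rle_trans; [apply Rabs_triang |]. rewrite Rabs_mult, (Rabs_pos_eq s) by lra.
      assert (Rabs z <= 1) by (apply Rabs_le; lra). nra. }
    replace (- (3 / 2)) with (- (1 / 2) + - 1) by field.
    rewrite exp_plus. pose proof sqrt_2PI_bounds.
    assert (exp (- (1 / 2)) <= exp (- z ^ 2 / 2)) by (apply exp_le_compat; nra).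
    assert (exp (- 1) * exp (- Rabs d) <= exp (- Rabs (d + s * z)))
      by (rewrite <- exp_plus; apply exp_le_compat; lra).
    pose proof (exp_pos (- (1 / 2))); pose proof (exp_pos (- 1)); pose proof (exp_pos (- Rabs d)).
    apply Rle_trans with ((exp (- (1 / 2)) / sqrt (2 * PI)) * (exp (- 1) * exp (- Rabs d)));
      [right; field; lra |].
    apply Rmult_le_compat; try (apply Rlt_le, Rdiv_lt_0_compat); try nra.
    unfold Rdiv; apply Rmult_le_compat_r; [apply Rlt_le, Rinv_0_lt_compat |]; lra. }
  assert (Hint : RInt (fun _ => c) (-1) 1 <= RInt h (-1) 1).
  { apply RInt_le; [lra | apply continuous_locally_integrable; intros; apply continuous_const
                   | apply Hh | intros z Hz; apply Hwindow; lra]. }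
  rewrite RInt_const in Hint.
  unfold scal in Hint; simpl in Hint; unfold mult in Hint; simpl in Hint.
  assert (Hlow : RInt h (-1) 1 <= G s d).
  { apply is_RInt_R_ge_RInt; [lra | apply Hh | | apply is_RInt_G, Hs].
    intros z; unfold h. pose proof (phi_pos z); pose proof (ell_exp_bounds (d + s * z)); nra. }
  pose proof gauss_window_constant. pose proof (exp_pos (- Rabs d)).
  assert (exp (- Rabs d) / 11 <= (1 - -1) * c); [| lra].
  unfold c. apply Rle_trans with (exp (- Rabs d) * (2 * exp (- (3 / 2)) / sqrt (2 * PI))).
  - replace (exp (- Rabs d) / 11) with (exp (- Rabs d) * (1 / 11)) by field.
    apply Rmult_le_compat_l; lra.
  - right; field. pose proof sqrt_2PI_bounds; lra.
Qed.

Lemma mean_value (f df : R -> R) : (forall x, is_derive f x (df x)) ->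
  forall a b, exists c, Rmin a b <= c <= Rmax a b /\ f b - f a = df c * (b - a).
Proof.
  intros Hf a b. apply MVT_gen; [intros; apply Hf |].
  intros x _. apply continuity_pt_filterlim.
  apply (ex_derive_continuous (K := R_AbsRing) (V := R_NormedModule)); eexists; apply Hf.
Qed.

Lemma convex_flat_at_0_nonneg (k dk ddk : R -> R) :
  (forall x, is_derive k x (dk x)) -> (forall x, is_derive dk x (ddk x)) ->
  (forall x, 0 <= ddk x) -> k 0 = 0 -> dk 0 = 0 -> forall x, 0 <= k x.
Proof.
  intros Hk Hdk Hddk Hk0 Hdk0.
  assert (Hmono : forall x y, x <= y -> dk x <= dk y).
  { intros x y Hxy. destruct (mean_value dk ddk Hdk x y) as [c [_ Hc]].
    specialize (Hddk c); nra. }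
  intros x. destruct (mean_value k dk Hk 0 x) as [c [Hc E]].
  unfold Rmin, Rmax in Hc. destruct (Rle_dec 0 x).
  - pose proof (Hmono 0 c ltac:(lra)); nra.
  - pose proof (Hmono c 0 ltac:(lra)); nra.
Qed.

Lemma quadratic_lower (h : R -> R) (c : R) :
  (forall x, ex_derive h x) -> (forall x, ex_derive (Derive h) x) ->
  (forall x, c <= Derive_n h 2 x) ->
  forall x, h 0 + Derive h 0 * x + c * x ^ 2 / 2 <= h x.
Proof.
  intros H1 H2 H3 x.
  cut (0 <= h x - h 0 - Derive h 0 * x - c * x ^ 2 / 2); [lra |].
  apply (convex_flat_at_0_nonneg (fun x => h x - h 0 - Derive h 0 * x - c * x ^ 2 / 2)
           (fun x => Derive h x - Derive h 0 - c * x)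
           (fun x => Derive (Derive h) x - c)).
  - intros y; auto_derive; [apply H1 | change (fun z => h z) with h; field].
  - intros y; auto_derive; [apply H2 | change (fun z => Derive h z) with (Derive h); ring].
  - intros y; specialize (H3 y); change (Derive_n h 2 y) with (Derive (Derive h) y) in H3; lra.
  - field.
  - ring.
Qed.

Lemma quadratic_upper (h : R -> R) (c : R) :
  (forall x, ex_derive h x) -> (forall x, ex_derive (Derive h) x) ->
  (forall x, Derive_n h 2 x <= c) ->
  forall x, h x <= h 0 + Derive h 0 * x + c * x ^ 2 / 2.
Proof.
  intros H1 H2 H3 x.
  cut (0 <= h 0 + Derive h 0 * x + c * x ^ 2 / 2 - h x); [lra |].
  apply (convex_flat_at_0_nonneg (fun x => h 0 + Derive h 0 * x + c * x ^ 2 / 2 - h x)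
           (fun x => Derive h 0 + c * x - Derive h x)
           (fun x => c - Derive (Derive h) x)).
  - intros y; auto_derive; [apply H1 | change (fun z => h z) with h; field].
  - intros y; auto_derive; [apply H2 | change (fun z => Derive h z) with (Derive h); ring].
  - intros y; specialize (H3 y); change (Derive_n h 2 y) with (Derive (Derive h) y) in H3; lra.
  - field.
  - ring.
Qed.

Lemma is_RInt_profile_right (A rho : R) : 0 < rho ->
  is_RInt_right (fun d => exp (A * d - rho / 2 * d ^ 2)) 0
    (int_0_inf (fun d => exp (A * d - rho / 2 * d ^ 2))).
Proof.
  intros Hrho. set (C := (A + 1) ^ 2 / (2 * rho)).
  apply is_RInt_gen_of_ex; [apply at_point_filter | apply Rbar_locally_filter |].
  apply (ex_RInt_gen_dominated _ (fun x => exp (C - 1 * (x - 0))) _ _ (exp C / 1));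
    try apply at_point_filter; try apply Rbar_locally_filter.
  - apply continuous_locally_integrable; intros x.
    apply (ex_derive_continuous (K := R_AbsRing) (V := R_NormedModule)); auto_derive; auto.
  - apply continuous_locally_integrable; intros x.
    apply (continuous_ext (fun x => exp (C + (-1) * x))); [intros; f_equal; ring |].
    apply continuous_exp_affine.
  - intros x. rewrite Rabs_pos_eq by apply Rlt_le, exp_pos. apply exp_le_compat.
    assert (E : C - 1 * (x - 0) - (A * x - rho / 2 * x ^ 2) = rho / 2 * (x - (A + 1) / rho) ^ 2)
      by (unfold C; field; lra).
    pose proof (pow2_ge_0 (x - (A + 1) / rho)); nra.
  - apply is_RInt_exp_right; lra.
Qed.

Lemma RInt_R_lower_by_profile (g : R -> R) L (c s rho A : R) :
  0 < rho -> 0 <= c -> A <= Rabs s - 1 -> (forall x, 0 <= g x) ->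
  (forall x, c * exp (s * x - rho / 2 * x ^ 2 - Rabs x) <= g x) -> is_RInt_R g L ->
  c * int_0_inf (fun d => exp (A * d - rho / 2 * d ^ 2)) <= L.
Proof.
  intros Hrho Hc HA Hg Hprof HL.
  assert (HI : is_RInt_right (fun d => c * exp (A * d - rho / 2 * d ^ 2)) 0
                 (c * int_0_inf (fun d => exp (A * d - rho / 2 * d ^ 2))))
    by exact (is_RInt_gen_scal _ c _ (is_RInt_profile_right A rho Hrho)).
  assert (Hexp : forall x y, 0 <= x -> A * x <= y - x ->
                   c * exp (A * x - rho / 2 * x ^ 2) <= c * exp (y - rho / 2 * x ^ 2 - x)).
  { intros x y Hx Hxy. apply Rmult_le_compat_l; [exact Hc |]. apply exp_le_compat; lra. }
  destruct (Rle_or_lt 0 s) as [Hs | Hs].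
  - refine (is_RInt_right_le_R _ g _ _ Hg _ HI HL).
    intros x Hx; eapply Rle_trans; [| apply Hprof]. rewrite (Rabs_pos_eq x) by exact Hx.
    apply Hexp; [exact Hx |]. rewrite Rabs_pos_eq in HA by exact Hs. nra.
  - refine (is_RInt_right_le_R _ (fun x => g (- x)) _ _ (fun x => Hg (- x)) _ HI
              (is_RInt_R_reflect _ _ HL)).
    intros x Hx; eapply Rle_trans; [| apply (Hprof (- x))].
    rewrite Rabs_Ropp, (Rabs_pos_eq x) by exact Hx.
    replace (rho / 2 * (- x) ^ 2) with (rho / 2 * x ^ 2) by (unfold Rdiv; ring).
    apply Hexp; [exact Hx |]. rewrite Rabs_left in HA by exact Hs. nra.
Qed.

Lemma gauss_le_laplace (s a x : R) : 0 < a ->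
  exp (s * x - a / 2 * x ^ 2) <= exp (s ^ 2 / (2 * a) + 1 / 2 - sqrt a * Rabs (x - s / a)).
Proof.
  intros Ha. apply exp_le_compat.
  assert (Hk : sqrt a * sqrt a = a) by (apply sqrt_sqrt; lra).
  assert (Hsq : (sqrt a * Rabs (x - s / a)) ^ 2 = a * (x - s / a) ^ 2)
    by (rewrite Rpow_mult_distr, pow2_abs; f_equal; simpl; rewrite Rmult_1_r; exact Hk).
  assert (E : s * x - a / 2 * x ^ 2 = s ^ 2 / (2 * a) - a * (x - s / a) ^ 2 / 2)
    by (field; lra).
  pose proof (pow2_ge_0 (sqrt a * Rabs (x - s / a) - 1)). nra.
Qed.

Lemma RInt_R_upper_by_profile (f : R -> R) L (C s a : R) :
  0 < a -> 0 <= C -> (forall x, f x <= C * exp (s * x - a / 2 * x ^ 2)) -> is_RInt_R f L ->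
  L <= C * (2 * sqrt PI * exp (s ^ 2 / a) / sqrt a).
Proof.
  intros Ha HC Hf HL. set (c0 := s ^ 2 / (2 * a) + 1 / 2).
  assert (Hk : 0 < sqrt a) by (apply sqrt_lt_R0, Ha).
  assert (HU : is_RInt_R (fun x => C * exp (c0 - sqrt a * Rabs (x - s / a)))
                 (C * (2 * exp c0 / sqrt a)))
    by exact (is_RInt_gen_scal _ C _ (is_RInt_exp_abs c0 (sqrt a) (s / a) Hk)).
  assert (HLU : L <= C * (2 * exp c0 / sqrt a)).
  { apply (is_RInt_R_le _ _ _ _ (fun x => Rle_trans _ _ _ (Hf x)
             (Rmult_le_compat_l _ _ _ HC (gauss_le_laplace s a x Ha))) HL HU). }
  assert (Hc0 : exp c0 <= sqrt PI * exp (s ^ 2 / a)).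
  { unfold c0. rewrite exp_plus, Rmult_comm. apply Rmult_le_compat; try apply Rlt_le, exp_pos.
    - rewrite <- (sqrt_square (exp (1 / 2))) by apply Rlt_le, exp_pos.
      apply sqrt_le_1_alt. rewrite <- exp_plus. replace (1 / 2 + 1 / 2) with 1 by field.
      pose proof exp_le_3; pose proof PI2_3_2; lra.
    - apply exp_le_compat.
      assert (0 <= s ^ 2 / a) by (apply Rdiv_le_0_compat; [apply pow2_ge_0 | lra]).
      replace (s ^ 2 / (2 * a)) with ((s ^ 2 / a) / 2) by (field; lra). lra. }
  eapply Rle_trans; [exact HLU |]. apply Rmult_le_compat_l; [exact HC |].
  unfold Rdiv; apply Rmult_le_compat_r; [apply Rlt_le, Rinv_0_lt_compat, Hk | lra].
Qed.

Section Density.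

Variable p : R -> R.
Hypothesis Hp_pos : forall x, 0 < p x.
Hypothesis Hlogp_d1 : forall x, ex_derive (fun y => ln (p y)) x.

Lemma density_derive (x : R) : is_derive p x (p x * Derive (fun y => ln (p y)) x).
Proof.
  apply (is_derive_ext (fun y => exp (ln (p y)))); [intros; apply exp_ln, Hp_pos |].
  replace (p x * Derive (fun y => ln (p y)) x)
    with (scal (Derive (fun y => ln (p y)) x) (exp (ln (p x))))
    by (rewrite exp_ln by apply Hp_pos; unfold scal; simpl; unfold mult; simpl; ring).
  apply (is_derive_comp exp (fun y => ln (p y)));
    [apply is_derive_exp | apply Derive_correct, Hlogp_d1].
Qed.

Lemma density_continuous (x : R) : continuous p x.
Proof.
  apply (ex_derive_continuous (K := R_AbsRing) (V := R_NormedModule)).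
  eexists; apply density_derive.
Qed.

Lemma score_log_derive (x : R) : score p x = Derive (fun y => ln (p y)) x.
Proof.
  unfold score. rewrite (is_derive_unique _ _ _ (density_derive x)).
  field. pose proof (Hp_pos x); lra.
Qed.

Hypothesis Hlogp_d2 : forall x, ex_derive (Derive (fun y => ln (p y))) x.

Lemma density_lower (rho : R) : (forall x, - rho <= Derive_n (fun y => ln (p y)) 2 x) ->
  forall x, p 0 * exp (score p 0 * x - rho / 2 * x ^ 2) <= p x.
Proof.
  intros Hbd x. pose proof (quadratic_lower _ (- rho) Hlogp_d1 Hlogp_d2 Hbd x) as H.
  rewrite <- (exp_ln (p 0)), <- (exp_ln (p x)), <- exp_plus by apply Hp_pos.
  apply exp_le_compat. rewrite score_log_derive. cbv beta in H.
  change (Derive (fun y : R_AbsRing => ln (p y)) 0) with (Derive (fun y : R => ln (p y)) 0) in H.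
  replace (- rho * x ^ 2 / 2) with (- (rho / 2 * x ^ 2)) in H by field. lra.
Qed.

Lemma density_upper (nu : R) : (forall x, Derive_n (fun y => ln (p y)) 2 x <= - nu) ->
  forall x, p x <= p 0 * exp (score p 0 * x - nu / 2 * x ^ 2).
Proof.
  intros Hbd x. pose proof (quadratic_upper _ (- nu) Hlogp_d1 Hlogp_d2 Hbd x) as H.
  rewrite <- (exp_ln (p 0)), <- (exp_ln (p x)), <- exp_plus by apply Hp_pos.
  apply exp_le_compat. rewrite score_log_derive. cbv beta in H.
  change (Derive (fun y : R_AbsRing => ln (p y)) 0) with (Derive (fun y : R => ln (p y)) 0) in H.
  replace (- nu * x ^ 2 / 2) with (- (nu / 2 * x ^ 2)) in H by field. lra.
Qed.

End Density.

(* gamma*_sigma >= sigma^2, so gamma*_sigma <= 1 forces sigma <= 1. *)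
Lemma sq_le_gamma_star (sigma : R) : 0 < sigma -> sigma ^ 2 <= gamma_star sigma.
Proof.
  intros Hs. unfold gamma_star.
  pose proof (sqrt_pos (2 * ln (4 * sqrt 2 / (sqrt PI * sigma)))). nra.
Qed.

Lemma two_sqrt_PI_ratio : 2 * (2 * sqrt PI) / sqrt (2 * PI) = 2 * sqrt 2.
Proof.
  pose proof PI2_3_2.
  assert (Hsplit : sqrt (2 * PI) = sqrt 2 * sqrt PI) by (apply sqrt_mult; lra).
  assert (H2 : sqrt 2 * sqrt 2 = 2) by (apply sqrt_sqrt; lra).
  assert (0 < sqrt 2) by (apply sqrt_lt_R0; lra).
  assert (0 < sqrt PI) by (apply sqrt_lt_R0; lra).
  assert (E : 2 * (2 * sqrt PI) = 2 * sqrt 2 * (sqrt 2 * sqrt PI)).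
  { replace (2 * sqrt 2 * (sqrt 2 * sqrt PI)) with (2 * (sqrt 2 * sqrt 2) * sqrt PI) by ring.
    rewrite H2; ring. }
  rewrite Hsplit, E. field; lra.
Qed.

Section WeightedIntegrals.

Variable p : R -> R.
Hypothesis Hp_pos : forall x, 0 < p x.
Hypothesis Hp_cont : forall x, continuous p x.
Hypothesis Hp_int : is_RInt_R p 1.

Lemma is_RInt_R_weighted (w : R -> R) (M : R) :
  (forall x, continuous w x) -> (forall x, 0 <= w x <= M) ->
  is_RInt_R (fun x => p x * w x) (int_R (fun x => p x * w x)).
Proof.
  intros Hw_cont Hw_bd. apply is_RInt_gen_of_ex; try apply Rbar_locally_filter.
  apply (ex_RInt_gen_dominated _ (fun x => M * p x) _ _ (M * 1));
    try apply Rbar_locally_filter.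
  - apply continuous_locally_integrable; intros x.
    apply (continuous_mult (K := R_AbsRing)); auto.
  - apply continuous_locally_integrable; intros x.
    apply (continuous_scal_r (K := R_AbsRing) M p), Hp_cont.
  - intros x. pose proof (Hp_pos x); pose proof (Hw_bd x).
    rewrite Rabs_pos_eq; nra.
  - exact (is_RInt_gen_scal _ M _ Hp_int).
Qed.

(* Differentiating under the integral via the closed form of d/dsigma g_sigma. *)
Lemma dL_dsigma_split (sigma : R) : 0 < sigma ->
  dL_dsigma p sigma = sigma * int_R (fun x => p x * G sigma x)
                      - 2 * int_R (fun x => p x * phi (x / sigma)).
Proof.
  intros Hs.
  pose proof (is_RInt_R_weighted (G sigma) gauss_total
                (fun x => G_continuous sigma x Hs) (fun x => G_bounds sigma x Hs)) as HG.
  pose proof (is_RInt_R_weighted (fun m => phi (m / sigma)) 1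
                (fun x => phi_scaled_continuous sigma x (Rgt_not_eq _ _ Hs))
                (fun x => conj (Rlt_le _ _ (phi_pos _)) (phi_le_1 _))) as Hphi.
  unfold dL_dsigma, int_R at 1. apply RInt_gen_eq_of_is; try apply Rbar_locally_filter.
  pose proof (is_RInt_gen_minus _ _ _ _ (is_RInt_gen_scal _ sigma _ HG)
                (is_RInt_gen_scal _ 2 _ Hphi)) as H.
  revert H; apply is_RInt_gen_ext_eq; try apply Rbar_locally_filter.
  intros x. rewrite Derive_g_sig by exact Hs.
  unfold minus, plus, opp, scal; simpl; unfold mult; simpl; ring.
Qed.

Lemma weighted_G_lower (rho sigma : R) : 0 < rho -> 0 < sigma -> sigma <= 1 ->
  (forall x, p 0 * exp (score p 0 * x - rho / 2 * x ^ 2) <= p x) ->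
  p 0 / 11 * int_0_inf (fun d => exp ((Rabs (score p 0) - sqrt rho / 4 - 1) * d
                                      - rho / 2 * d ^ 2))
  <= int_R (fun x => p x * G sigma x).
Proof.
  intros Hrho Hs Hs1 Hplow. pose proof (Hp_pos 0).
  apply (RInt_R_lower_by_profile (fun x => p x * G sigma x) _ _ (score p 0) rho); try lra.
  - pose proof (sqrt_pos rho); lra.
  - intros x. pose proof (Hp_pos x); pose proof (G_bounds sigma x Hs); nra.
  - intros x. unfold Rminus at 1. rewrite exp_plus.
    pose proof (Hplow x); pose proof (G_lower sigma x Hs Hs1).
    pose proof (exp_pos (score p 0 * x - rho / 2 * x ^ 2)); pose proof (exp_pos (- Rabs x)).
    apply Rle_trans
      with ((p 0 * exp (score p 0 * x - rho / 2 * x ^ 2)) * (exp (- Rabs x) / 11));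
      [right; field | apply Rmult_le_compat; nra].
  - exact (is_RInt_R_weighted (G sigma) gauss_total
             (fun x => G_continuous sigma x Hs) (fun x => G_bounds sigma x Hs)).
Qed.

(* Second term: the Gaussian upper profile of p (nu-concavity) times phi(x/sigma) is a
   Gaussian profile of curvature nu + sigma^-2. *)
Lemma weighted_phi_upper (nu sigma : R) : 0 < nu -> 0 < sigma ->
  (forall x, p x <= p 0 * exp (score p 0 * x - nu / 2 * x ^ 2)) ->
  2 * int_R (fun x => p x * phi (x / sigma))
  <= p 0 * (2 * sqrt 2 * exp (score p 0 ^ 2 / (nu + / sigma ^ 2))
            * (1 / sqrt (nu + / sigma ^ 2))).
Proof.
  intros Hnu Hs Hpup. set (a := nu + / sigma ^ 2).
  assert (Ha : 0 < a).
  { pose proof (Rinv_0_lt_compat _ (pow_lt sigma 2 Hs)); unfold a; lra. }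
  assert (Hsa : 0 < sqrt a) by (apply sqrt_lt_R0, Ha).
  pose proof (Hp_pos 0). pose proof sqrt_2PI_bounds.
  assert (Hup : int_R (fun x => p x * phi (x / sigma))
                <= p 0 / sqrt (2 * PI) * (2 * sqrt PI * exp (score p 0 ^ 2 / a) / sqrt a)).
  { apply (RInt_R_upper_by_profile (fun x => p x * phi (x / sigma)));
      [exact Ha | apply Rlt_le, Rdiv_lt_0_compat; lra | |].
    - intros x. pose proof (Hpup x). pose proof (phi_pos (x / sigma)).
      apply Rle_trans with (p 0 * exp (score p 0 * x - nu / 2 * x ^ 2) * phi (x / sigma));
        [apply Rmult_le_compat_r; lra |].
      unfold std_normal_pdf.
      replace (score p 0 * x - a / 2 * x ^ 2)
        with (score p 0 * x - nu / 2 * x ^ 2 + - (x / sigma) ^ 2 / 2)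
        by (unfold a; field; lra).
      rewrite exp_plus; right; field; lra.
    - exact (is_RInt_R_weighted (fun m => phi (m / sigma)) 1
               (fun x => phi_scaled_continuous sigma x (Rgt_not_eq _ _ Hs))
               (fun x => conj (Rlt_le _ _ (phi_pos _)) (phi_le_1 _))). }
  apply Rle_trans
    with (2 * (p 0 / sqrt (2 * PI) * (2 * sqrt PI * exp (score p 0 ^ 2 / a) / sqrt a)));
    [lra |].
  right. rewrite <- two_sqrt_PI_ratio. field; lra.
Qed.

End WeightedIntegrals.

Theorem lemma9 (p : R -> R) (nu rho sigma : R)
  (Hnu : 0 < nu) (Hnurho : nu <= rho) (Hsigma : 0 < sigma)
  (* p is a probability density on R *)
  (Hp_pos : forall x, 0 < p x)
  (Hp_int : is_RInt_gen p (Rbar_locally m_infty) (Rbar_locally p_infty) 1)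
  (* log p is differentiable, nu-strongly concave and rho-smooth *)
  (Hlogp_d1 : forall x, ex_derive (fun y => ln (p y)) x)
  (Hlogp_d2 : forall x, ex_derive (Derive (fun y => ln (p y))) x)
  (Hlogp_bd : forall x, - rho <= Derive_n (fun y => ln (p y)) 2 x <= - nu)
  (Hsig_small : sigma <= 4 * sqrt 2 / sqrt PI)
  (Hgamma : gamma_star sigma <= Rmin 1 (1 / (4 * sqrt rho))) :
  dL_dsigma p sigma >=
    p 0 * (sigma / 11 *
             int_0_inf (fun d => exp ((Rabs (score p 0) - sqrt rho / 4 - 1) * d
                                      - rho / 2 * d ^ 2))
           - 2 * sqrt 2 * exp (score p 0 ^ 2 / (nu + / sigma ^ 2))
             * (1 / sqrt (nu + / sigma ^ 2))).
Proof.
  assert (Hs1 : sigma <= 1).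
  { pose proof (sq_le_gamma_star sigma Hsigma); pose proof (Rmin_l 1 (1 / (4 * sqrt rho))). nra. }
  pose proof (density_continuous p Hp_pos Hlogp_d1) as Hp_cont.
  pose proof (density_lower p Hp_pos Hlogp_d1 Hlogp_d2 rho (fun x => proj1 (Hlogp_bd x))) as Hplow.
  pose proof (density_upper p Hp_pos Hlogp_d1 Hlogp_d2 nu (fun x => proj2 (Hlogp_bd x))) as Hpup.
  pose proof (weighted_G_lower p Hp_pos Hp_cont Hp_int rho sigma ltac:(lra) Hsigma Hs1 Hplow)
    as Hlow.
  pose proof (weighted_phi_upper p Hp_pos Hp_cont Hp_int nu sigma Hnu Hsigma Hpup) as Hup.
  rewrite (dL_dsigma_split p Hp_pos Hp_cont Hp_int sigma Hsigma).
  set (I := int_0_inf _) in *. set (K := 2 * sqrt 2 * _ * _) in *.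
  apply Rle_ge.
  replace (p 0 * (sigma / 11 * I - K)) with (sigma * (p 0 / 11 * I) - p 0 * K) by field.
  pose proof (Rmult_le_compat_l _ _ _ (Rlt_le _ _ Hsigma) Hlow). lra.
Qed.
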